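(* Let $\mathfrak{f}_r$ denote the free $2$-step nilpotent Lie algebra of rank $r\ge2$. (i) If $r\equiv0$ or $3\pmod 4$, then $\mathfrak{f}_r$ admits a complex structure. (ii) If $r\equiv1$ or $2\pmod 4$, then the Lie algebra $\mathbb{R}\oplus\mathfrak{f}_r$ (direct sum with a one-dimensional abelian Lie algebra) admits a complex structure.
   Context: For a real vector space $V$ of dimension $r$, the free $2$-step nilpotent Lie algebra of rank $r$ is $\mathfrak{f}_r=V\oplus\Lambda^2(V)$ with Lie bracket $[v,w]=v\wedge w$ for $v,w\in V$ and $\Lambda^2(V)$ central. A complex structure on a real Lie algebra $\mathfrak{g}$ is a linear map $J:\mathfrak{g}\to\mathfrak{g}$ with $J^2=-I$ and $N_J(x,y):=[x,y]+J([Jx,y]+[x,Jy])-[Jx,Jy]=0$ for all $x,y\in\mathfrak{g}$. *)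

From HB Require Import structures.
From mathcomp Require Import all_boot all_order all_algebra.
From mathcomp Require Import reals.
Set Implicit Arguments. Unset Strict Implicit. Unset Printing Implicit Defensive.
Import Order.TTheory GRing.Theory Num.Theory.
Local Open Scope ring_scope.

(* Index set of the standard basis e_i ^ e_j (i < j) of Lambda^2(R^r). *)
Definition pairs (r : nat) : finType := {p : 'I_r * 'I_r | (p.1 < p.2)%N}.

(* Basis index set of f_r = V (+) Lambda^2 V, V = R^r:
   inl i  <-> e_i,   inr (i,j) <-> e_i ^ e_j (i<j). *)
Definition free2_idx (r : nat) : finType := ('I_r + pairs r)%type.

Notation vec R T := {ffun T -> (R : realType)^o}.

(* Lie bracket of the free 2-step nilpotent Lie algebra f_r:
   [v + a, w + b] = v ^ w, whose (i,j)-coordinate is v_i w_j - v_j w_i. *)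
Definition free2_bracket (R : realType) (r : nat)
  (x y : vec R (free2_idx r)) : vec R (free2_idx r) :=
  [ffun k => match k with
             | inl _ => 0
             | inr p => x (inl (sval p).1) * y (inl (sval p).2)
                        - x (inl (sval p).2) * y (inl (sval p).1)
             end].

(* R (+) f_r : the extra basis vector (None) is central and the bracket
   takes values in f_r. *)
Definition sum_idx (r : nat) : finType := option (free2_idx r).

Definition sum_bracket (R : realType) (r : nat)
  (x y : vec R (sum_idx r)) : vec R (sum_idx r) :=
  let x' := [ffun k => x (Some k)] in
  let y' := [ffun k => y (Some k)] in
  [ffun k => match k with
             | None => 0
             | Some k' => free2_bracket x' y' k'
             end].

Definition complex_structure (R : realType) (T : finType)
  (br : vec R T -> vec R T -> vec R T) (J : vec R T -> vec R T) : Prop :=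
  linear J /\
  (forall x, J (J x) = - x) /\
  (forall x y, br x y + J (br (J x) y + br x (J y)) - br (J x) (J y) = 0).

From HB Require Import structures.
From mathcomp Require Import all_boot all_order all_algebra.
From mathcomp Require Import reals.
From mathcomp Require Import zify ring.
Set Implicit Arguments.
Unset Strict Implicit.
Unset Printing Implicit Defensive.

Import GRing.Theory.
Local Open Scope ring_scope.

(* Let m = r/2 and pair the generators e_(2t), e_(2t+1), t < m, by the standard
   complex structure.  On a wedge e_a ^ e_b that is not one of the central
   vectors z_t = e_(2t) ^ e_(2t+1), let J act through a factor in the paired
   block (the second one when possible).  The remaining basis vectors -- the
   m vectors z_t, the unpaired generator if r is odd and, for R (+) f_r, the
   extra central vector -- are paired among themselves; this needs their
   number m + (r mod 2) + ext (ext = 1 for R (+) f_r, 0 for f_r) to be even,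
   which is exactly the congruence condition on r.  J is a signed permutation of the basis and the Nijenhuis
   tensor vanishes coordinatewise; at z_t this is because J restricted to the
   plane of e_(2t), e_(2t+1) has trace 0 and determinant 1. *)

Definition partner (v : nat) : nat := if odd v then v.-1 else v.+1.

Definition parity_sign {R : nzRingType} (v : nat) : R := if odd v then 1 else -1.

Lemma partnerK : involutive partner.
Proof. by move=> v; rewrite /partner; case: ifP; case: ifP; lia. Qed.

Lemma partner_inj : injective partner.
Proof. exact: inv_inj partnerK. Qed.

Lemma partner_double t : partner t.*2 = t.*2.+1.
Proof. by rewrite /partner odd_double. Qed.

Lemma partner_doubleS t : partner t.*2.+1 = t.*2.
Proof. by rewrite /partner /= odd_double. Qed.

Lemma partner_lt_double v n : (v < n.*2)%N -> (partner v < n.*2)%N.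
Proof. by rewrite /partner; case: ifP; lia. Qed.

Lemma partner_wedge a b n : (a < b < n.*2)%N -> b != partner a ->
  (a < partner b < n.*2)%N.
Proof. by rewrite /partner; case: ifP; case: ifP; lia. Qed.

Lemma parity_sign_partner (R : nzRingType) v :
  parity_sign (partner v) = - parity_sign v :> R.
Proof.
rewrite /parity_sign /partner; case: (boolP (odd v)) => hv.
- by have -> : odd v.-1 = false by lia.
- by rewrite /= hv opprK.
Qed.

Lemma parity_sign_mul_partner (R : nzRingType) v :
  parity_sign v * parity_sign (partner v) = -1 :> R.
Proof.
by rewrite parity_sign_partner mulrN /parity_sign; case: ifP; rewrite ?mulr1 ?mulrN1 ?opprK.
Qed.

Section CoordinateModel.

Variables (r ext : nat).

Local Notation m := r./2.
Local Notation nspare := (m + odd r + ext)%N.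

(* Basis vectors are coded by pairs: (a, a) is the generator e_a (or, for
   a = r, the extra central vector), and (a, b) with a < b is e_a ^ e_b. *)
Definition valid_code (c : nat * nat) : bool :=
  (c.1 < c.2 < r)%N || (c.1 == c.2) && (c.1 < r + ext)%N.

(* The basis vectors that J pairs among themselves, enumerated by t < nspare:
   first the z_t, then the generators left out of the paired block. *)
Definition spare_code (t : nat) : nat * nat :=
  if (t < m)%N then (t.*2, t.*2.+1) else (t + m, t + m)%N.

Definition tau_code (c : nat * nat) : nat * nat :=
  let: (a, b) := c in
  if a == b then
    if (a < m.*2)%N then (partner a, partner a) else spare_code (partner (a - m))
  else if b == partner a then spare_code (partner a./2)
  else if (b < m.*2)%N then (a, partner b) else (partner a, b).

Definition eps_code {R : nzRingType} (c : nat * nat) : R :=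
  let: (a, b) := c in
  if a == b then
    if (a < m.*2)%N then parity_sign a else parity_sign (a - m)
  else if b == partner a then parity_sign a./2
  else if (b < m.*2)%N then parity_sign b else parity_sign a.

Variant code_spec : nat * nat -> Type :=
  | CodeGen a of (a < m.*2)%N : code_spec (a, a)
  | CodeSpare t of (t < nspare)%N : code_spec (spare_code t)
  | CodeWedge a b of (a < b < m.*2)%N & b != partner a : code_spec (a, b)
  | CodeWedgeLast a of (a < m.*2 < r)%N : code_spec (a, m.*2).

Lemma valid_codeP c : valid_code c -> code_spec c.
Proof.
case: c => a b; rewrite /valid_code /=.
case: (eqVneq a b) => [<- /= ha|hab /= hlt].
  case: (ltnP a m.*2) => [|hma]; first exact: CodeGen.
  have -> : (a, a) = spare_code (a - m) by rewrite /spare_code ifN; [congr pair|]; lia.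
  by apply: CodeSpare; lia.
case: (eqVneq b (partner a)) => [hb|hb].
  have -> : (a, b) = spare_code a./2.
    by rewrite /spare_code ifT; [congr pair|]; move: hb hlt; rewrite /partner; case: ifP; lia.
  by apply: CodeSpare; move: hb hlt; rewrite /partner; case: ifP; lia.
case: (ltnP b m.*2) => hbm; first by apply: CodeWedge => //; lia.
have -> : b = m.*2 by lia.
by apply: CodeWedgeLast; lia.
Qed.

Lemma valid_spare_code t : (t < nspare)%N -> valid_code (spare_code t).
Proof. by rewrite /valid_code /spare_code; case: ifP => /=; lia. Qed.

Lemma tau_spare_code t : tau_code (spare_code t) = spare_code (partner t).
Proof.
rewrite /spare_code; case: ifP => ht /=.
  by rewrite ifN ?partner_double ?eqxx ?doubleK //; lia.
by rewrite eqxx ifN ?addnK //; lia.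
Qed.

Lemma eps_spare_code (R : nzRingType) t :
  eps_code (spare_code t) = parity_sign t :> R.
Proof.
rewrite /spare_code; case: ifP => ht /=.
  by rewrite ifN ?partner_double ?eqxx ?doubleK //; lia.
by rewrite eqxx ifN ?addnK //; lia.
Qed.

Lemma tau_code_gen a : (a < m.*2)%N -> tau_code (a, a) = (partner a, partner a).
Proof. by move=> ha; rewrite /= eqxx ha. Qed.

Lemma eps_code_gen (R : nzRingType) a :
  (a < m.*2)%N -> eps_code (a, a) = parity_sign a :> R.
Proof. by move=> ha; rewrite /= eqxx ha. Qed.

Lemma tau_code_wedge a b : (a < b < m.*2)%N -> b != partner a ->
  tau_code (a, b) = (a, partner b).
Proof. by move=> hab hb; rewrite /= ifN ?(negbTE hb) ?ifT //; lia. Qed.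

Lemma eps_code_wedge (R : nzRingType) a b : (a < b < m.*2)%N -> b != partner a ->
  eps_code (a, b) = parity_sign b :> R.
Proof. by move=> hab hb; rewrite /= ifN ?(negbTE hb) ?ifT //; lia. Qed.

Lemma tau_code_wedge_last a : (a < m.*2)%N -> tau_code (a, m.*2) = (partner a, m.*2).
Proof.
move=> ha; have hpa := partner_lt_double ha.
by rewrite /= ifN ?ifN ?ltnn //; lia.
Qed.

Lemma eps_code_wedge_last (R : nzRingType) a :
  (a < m.*2)%N -> eps_code (a, m.*2) = parity_sign a :> R.
Proof.
move=> ha; have hpa := partner_lt_double ha.
by rewrite /= ifN ?ifN ?ltnn //; lia.
Qed.

Lemma tau_codeK c : valid_code c -> tau_code (tau_code c) = c.
Proof.
case/valid_codeP=> [a ha|t _|a b hab hb|a /andP[ha hmr]].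
- have hpa := partner_lt_double ha.
  by rewrite !tau_code_gen ?partnerK.
- by rewrite !tau_spare_code partnerK.
- have hpb := partner_wedge hab hb.
  by rewrite !tau_code_wedge ?partnerK ?(inj_eq partner_inj) //; lia.
- have hpa := partner_lt_double ha.
  by rewrite !tau_code_wedge_last ?partnerK //; lia.
Qed.

Lemma eps_code_tau (R : nzRingType) c : valid_code c ->
  eps_code c * eps_code (tau_code c) = -1 :> R.
Proof.
case/valid_codeP=> [a ha|t _|a b hab hb|a /andP[ha hmr]].
- have hpa := partner_lt_double ha.
  by rewrite tau_code_gen // !eps_code_gen // parity_sign_mul_partner.
- by rewrite tau_spare_code !eps_spare_code parity_sign_mul_partner.
- have hpb := partner_wedge hab hb.
  rewrite tau_code_wedge // !eps_code_wedge ?parity_sign_mul_partner //.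
  by rewrite (inj_eq partner_inj); lia.
- have hpa := partner_lt_double ha.
  by rewrite tau_code_wedge_last // !eps_code_wedge_last // parity_sign_mul_partner.
Qed.

Hypothesis spare_even : ~~ odd nspare.

Lemma valid_tau_code c : valid_code c -> valid_code (tau_code c).
Proof.
case/valid_codeP=> [a ha|t ht|a b hab hb|a /andP[ha hmr]].
- by rewrite tau_code_gen // /valid_code eqxx /=; have := partner_lt_double ha; lia.
- by rewrite tau_spare_code; apply: valid_spare_code; move: ht; rewrite /partner; case: ifP; lia.
- have hpb := partner_wedge hab hb.
  by rewrite tau_code_wedge // /valid_code /=; lia.
- by rewrite tau_code_wedge_last; [have := partner_lt_double ha|]; rewrite /valid_code /=; lia.
Qed.

Section Coordinates.

Variable R : comRingType.
Implicit Types (U V : nat * nat -> R).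

Definition cJ U (c : nat * nat) : R :=
  if valid_code c then eps_code c * U (tau_code c) else 0.

Definition cbracket U V (c : nat * nat) : R :=
  if (c.1 < c.2 < r)%N then U (c.1, c.1) * V (c.2, c.2) - U (c.2, c.2) * V (c.1, c.1)
  else 0.

Definition nijenhuis_coord U V (c : nat * nat) : R :=
  cbracket U V c + eps_code c * (cbracket (cJ U) V (tau_code c) + cbracket U (cJ V) (tau_code c))
  - cbracket (cJ U) (cJ V) c.

Lemma cJ_gen U v : (v < m.*2)%N -> cJ U (v, v) = parity_sign v * U (partner v, partner v).
Proof.
move=> hv; rewrite /cJ ifT ?eps_code_gen ?tau_code_gen //.
by rewrite /valid_code eqxx /=; lia.
Qed.

Lemma cbracket_diag U V v : cbracket U V (v, v) = 0.
Proof. by rewrite /cbracket /= ltnn. Qed.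

Lemma cbracket_wedge U V a b : (a < b < r)%N ->
  cbracket U V (a, b) = U (a, a) * V (b, b) - U (b, b) * V (a, a).
Proof. by move=> hab; rewrite /cbracket /= hab. Qed.

Lemma eq_cbracket U U' V V' : U =1 U' -> V =1 V' -> cbracket U V =1 cbracket U' V'.
Proof. by move=> eqU eqV c; rewrite /cbracket !eqU !eqV. Qed.

Lemma cbracket_cJ_spare U V t :
  cbracket (cJ U) V (spare_code t) + cbracket U (cJ V) (spare_code t) = 0.
Proof.
rewrite /spare_code; case: ifP => ht; last by rewrite !cbracket_diag addr0.
rewrite !cbracket_wedge ?cJ_gen ?partner_double ?partner_doubleS; try lia.
by rewrite /parity_sign /= odd_double /=; ring.
Qed.

Lemma cbracket_cJJ_spare U V t :
  cbracket (cJ U) (cJ V) (spare_code t) = cbracket U V (spare_code t).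
Proof.
rewrite /spare_code; case: ifP => ht; last by rewrite !cbracket_diag.
rewrite !cbracket_wedge ?cJ_gen ?partner_double ?partner_doubleS; try lia.
by rewrite /parity_sign /= odd_double /=; ring.
Qed.

Lemma nijenhuis_coord_eq0 U V c : valid_code c -> nijenhuis_coord U V c = 0.
Proof.
rewrite /nijenhuis_coord.
case/valid_codeP=> [a ha|t _|a b hab hb|a /andP[ha hmr]].
- by rewrite tau_code_gen // !cbracket_diag; ring.
- by rewrite tau_spare_code cbracket_cJ_spare cbracket_cJJ_spare mulr0; ring.
- have hpb := partner_wedge hab hb.
  rewrite tau_code_wedge // eps_code_wedge // !cbracket_wedge; try lia.
  rewrite !cJ_gen ?partnerK ?parity_sign_partner; try lia.
  by rewrite /parity_sign; case: (odd a); case: (odd b); ring.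
- have hpa := partner_lt_double ha.
  rewrite tau_code_wedge_last // eps_code_wedge_last // !cbracket_wedge; try lia.
  rewrite !(cJ_gen _ ha) !(cJ_gen _ hpa) partnerK parity_sign_partner.
  by rewrite /parity_sign; case: (odd a); ring.
Qed.

End Coordinates.

End CoordinateModel.

Section CodedComplexStructure.

Variables (R : realType) (T : finType) (code : T -> nat * nat).
Hypothesis code_inj : injective code.

Definition coord (x : vec R T) (c : nat * nat) : R :=
  if [pick k | code k == c] is Some k then x k else 0.

Lemma coord_code x k : coord x (code k) = x k.
Proof. by rewrite /coord; case: pickP => [k' /eqP/code_inj -> | /(_ k)]; rewrite ?eqxx. Qed.

Lemma coordD x y c : coord (x + y) c = coord x c + coord y c.
Proof. by rewrite /coord; case: pickP => [k _|_]; rewrite ?ffunE ?addr0. Qed.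

Lemma coordZ a x c : coord (a *: x) c = a * coord x c.
Proof. by rewrite /coord; case: pickP => [k _|_]; rewrite ?ffunE ?mulr0. Qed.

Variables (r ext : nat).
Hypothesis valid_code_code : forall k, valid_code r ext (code k).
Hypothesis code_onto : forall c, valid_code r ext c -> exists k, code k = c.

Lemma coord_invalid x c : ~~ valid_code r ext c -> coord x c = 0.
Proof.
by move=> hc; rewrite /coord; case: pickP => // k /eqP ek; move: hc; rewrite -ek valid_code_code.
Qed.

Definition coded_J (x : vec R T) : vec R T :=
  [ffun k => eps_code r (code k) * coord x (tau_code r (code k))].

Lemma coord_coded_J x c : coord (coded_J x) c = cJ r ext (coord x) c.
Proof.
rewrite /cJ; case: ifPn => hc; last exact: coord_invalid.
by case: (code_onto hc) => k <-; rewrite coord_code ffunE.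
Qed.

Variable br : vec R T -> vec R T -> vec R T.
Hypothesis br_coord : forall x y k, br x y k = cbracket r (coord x) (coord y) (code k).

Lemma coord_br x y c : coord (br x y) c = cbracket r (coord x) (coord y) c.
Proof.
have [hc|hc] := boolP (valid_code r ext c).
  by case: (code_onto hc) => k <-; rewrite coord_code br_coord.
rewrite coord_invalid // /cbracket ifN //.
by apply: contra hc; rewrite /valid_code => ->.
Qed.

Hypothesis spare_even : ~~ odd (r./2 + odd r + ext).

Lemma complex_structure_coded_J : complex_structure br coded_J.
Proof.
split; [|split].
- move=> a x y; apply/ffunP => k; rewrite !ffunE coordD coordZ /=.
  by rewrite mulrDr mulrCA.
- move=> x; apply/ffunP => k; have hk := valid_code_code k.
  rewrite !ffunE coord_coded_J /cJ valid_tau_code // (tau_codeK hk) coord_code.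
  by rewrite mulrA (eps_code_tau _ hk) mulN1r.
- move=> x y; apply/ffunP => k; rewrite !ffunE coordD !coord_br !br_coord.
  rewrite (eq_cbracket r (coord_coded_J x) (coord_coded_J y)).
  rewrite (eq_cbracket r (coord_coded_J x) (frefl _)).
  rewrite (eq_cbracket r (frefl _) (coord_coded_J y)).
  exact: nijenhuis_coord_eq0.
Qed.

End CodedComplexStructure.

Section Free2.

Variable r : nat.

Definition free2_code (k : free2_idx r) : nat * nat :=
  match k with
  | inl i => (nat_of_ord i, nat_of_ord i)
  | inr p => (nat_of_ord (sval p).1, nat_of_ord (sval p).2)
  end.

Lemma valid_free2_code k : valid_code r 0 (free2_code k).
Proof. by case: k => [i|[[i j] /= hij]]; rewrite /valid_code /= ?hij ?eqxx ?addn0 ltn_ord ?orbT. Qed.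

Lemma free2_code_inj : injective free2_code.
Proof.
move=> [i|[[i j] hij]] [i'|[[i' j'] hij']] //= [].
- by move=> /ord_inj ->.
- by move: hij' => /=; lia.
- by move: hij => /=; lia.
- by move=> /ord_inj ei /ord_inj ej; congr inr; apply: val_inj; rewrite /= ei ej.
Qed.

Lemma free2_code_onto c : valid_code r 0 c -> exists k, free2_code k = c.
Proof.
case: c => a b; rewrite /valid_code /= addn0.
case: (eqVneq a b) => [<- hv|hab hlt].
  have ha : (a < r)%N by lia.
  by exists (inl (Ordinal ha)).
have ha : (a < r)%N by lia.
have hb : (b < r)%N by lia.
have hab' : (a < b)%N by lia.
by exists (inr (exist _ (Ordinal ha, Ordinal hb) hab')).
Qed.

Lemma free2_bracket_coord (R : realType) (x y : vec R (free2_idx r)) k :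
  free2_bracket x y k = cbracket r (coord free2_code x) (coord free2_code y) (free2_code k).
Proof.
rewrite ffunE; case: k => [i|[[i j] /= hij]]; first by rewrite cbracket_diag.
rewrite cbracket_wedge ?hij ?ltn_ord //.
by rewrite -!(coord_code free2_code_inj _ (inl _)).
Qed.

Lemma free2_complex_structure (R : realType) :
  ~~ odd (r./2 + odd r) -> exists J, complex_structure (@free2_bracket R r) J.
Proof.
move=> h; have h0 : ~~ odd (r./2 + odd r + 0) by rewrite addn0.
eexists; exact: (complex_structure_coded_J free2_code_inj valid_free2_code
  free2_code_onto (@free2_bracket_coord R) h0).
Qed.

End Free2.

Section Sum.

Variable r : nat.

Definition sum_code (k : sum_idx r) : nat * nat :=
  if k is Some k' then free2_code k' else (r, r).

Lemma valid_sum_code k : valid_code r 1 (sum_code k).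
Proof.
case: k => [k|]; last by rewrite /valid_code /= eqxx; lia.
by have := valid_free2_code k; rewrite /valid_code /=; lia.
Qed.

Lemma sum_code_inj : injective sum_code.
Proof.
have free2_code_neq (k : free2_idx r) : free2_code k <> (r, r).
  by move=> ek; have := valid_free2_code k; rewrite ek /valid_code /=; lia.
move=> [k|] [k'|] //= ek; first by rewrite (free2_code_inj ek).
- by case: (free2_code_neq k).
- by case: (free2_code_neq k').
Qed.

Lemma sum_code_onto c : valid_code r 1 c -> exists k, sum_code k = c.
Proof.
move=> hv; have [->|hc] := eqVneq c (r, r); first by exists None.
have [k ek] : exists k : free2_idx r, free2_code k = c.
  by apply: free2_code_onto; move: hc hv; case: c => a b; rewrite /valid_code xpair_eqE /=; lia.
by exists (Some k).
Qed.

Lemma sum_bracket_coord (R : realType) (x y : vec R (sum_idx r)) k :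
  sum_bracket x y k = cbracket r (coord sum_code x) (coord sum_code y) (sum_code k).
Proof.
rewrite ffunE; case: k => [[i|[[i j] /= hij]]|] /=; rewrite ?ffunE ?cbracket_diag //.
rewrite cbracket_wedge ?hij ?ltn_ord //=.
by rewrite -!(coord_code sum_code_inj _ (Some (inl _))).
Qed.

Lemma sum_complex_structure (R : realType) :
  odd (r./2 + odd r) -> exists J, complex_structure (@sum_bracket R r) J.
Proof.
move=> h; have h1 : ~~ odd (r./2 + odd r + 1) by rewrite addn1 /= h.
eexists; exact: (complex_structure_coded_J sum_code_inj valid_sum_code
  sum_code_onto (@sum_bracket_coord R) h1).
Qed.

End Sum.

Theorem mainTheorem8 (R : realType) (r : nat) (hr : (2 <= r)%N) :
  ((r %% 4 = 0 \/ r %% 4 = 3)%N ->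
     exists J, complex_structure (@free2_bracket R r) J) /\
  ((r %% 4 = 1 \/ r %% 4 = 2)%N ->
     exists J, complex_structure (@sum_bracket R r) J).
Proof.
split=> hr4; [apply: free2_complex_structure | apply: sum_complex_structure]; lia.
Qed.
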